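(* Let $\gamma=(\mathcal E,\mathcal F,\pi)$ be an EBA context whose failure model satisfies $\mathcal F\subseteq SO(t)$. Then every action protocol $P$ that implements the knowledge-based program $\mathbf P^0$ in $\gamma$ is an EBA decision protocol for $\gamma$. Moreover, in every run of $\mathcal I_{\gamma,P}$ every nonfaulty agent decides by round $t+2$ (i.e. after at most $t+1$ rounds of message exchange), and Validity holds even for faulty agents: if any agent (faulty or not) decides $v$, then $\mathit{init}_j=v$ for some agent $j$.
   Context: Agents and runs. There are $n$ agents $\mathit{Agt}=\{1,\ldots,n\}$; time is $m\in\mathbb N$, and round $m+1$ is the step from time $m$ to time $m+1$. An information-exchange protocol $\mathcal E$ specifies for each agent $i$: a set $L_i$ of local states, a set $I_i\subseteq L_i$ of initial states, a set $A_i$ of actions, a set $M_i$ of messages, a function giving for $s\in L_i$, $a\in A_i$ and each agent $j$ the message $\mu_{ij}(s,a)\in M_i\cup\{\bot\}$ that $i$ sends to $j$ ($\bot$ means no message), and a transition function $\delta_i:L_i\times A_i\times\prod_j(M_j\cup\{\bot\})\to L_i$. A failure pattern is a pair $(\mathcal N,F)$ with $\mathcal N\subseteq\mathit{Agt}$ (the nonfaulty agents) and $F:\mathbb N\times\mathit{Agt}\times\mathit{Agt}\to\{0,1\}$, where $F(m,i,j)=0$ means the message from $i$ to $j$ in round $m+1$ is lost. The sending-omissions failure model $SO(t)$ ($t<n$) is the set of failure patterns with $|\mathit{Agt}\setminus\mathcal N|\le t$ such that $F(m,i,j)=0$ implies $i\notin\mathcal N$. An action protocol $P$ gives each agent $i$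 a map $P_i:L_i\to A_i$. Given $\mathcal E$, a failure model $\mathcal F$ and $P$, each initial global state (a failure pattern $(\mathcal N,F)\in\mathcal F$ and an $s_i\in I_i$ for each $i$) determines a unique run $r$: if $r_i(k)$ is $i$'s local state at time $k$, then $i$ performs $a_i=P_i(r_i(k))$, agent $j$ receives $m'_{ij}=\mu_{ij}(r_i(k),a_i)$ if $F(k,i,j)=1$ and $\bot$ otherwise, and $r_i(k+1)=\delta_i(r_i(k),a_i,(m'_{1i},\ldots,m'_{ni}))$; the failure pattern is fixed in the run and $\mathcal N(r)$ denotes its nonfaulty set. $\mathcal R_{\mathcal E,\mathcal F,P}$ is the set of all such runs. Agent $i$ decides $v$ in round $k$ of $r$ if $P_i(r_i(k-1))=\mathtt{decide}_i(v)$. An interpreted system $\mathcal I=(\mathcal R,\pi)$ is a set of runs with an interpretation $\pi$ of primitive propositions at points $(r,m)$. $\mathcal I,(r,m)\models K_i\varphi$ iff $\varphi$ holds at all points $(r',m')$ of $\mathcal I$ with $r'_i(m')=r_i(m)$; $\bigcirc\varphi$ holds at $(r,m)$ iff $\varphi$ holds at $(r,m+1)$; $\ominus\varphi$ holds at $(r,m)$ iff $m>0$ and $\varphi$ holds at $(r,m-1)$; $\mathcal I\models\varphi$ means $\varphi$ holds at all points. EBA contexts. An EBA context is a tuple $\gamma=(\mathcal E,\mathcal F,\pi)$ such that: each $A_i=\{\mathtt{decide}_i(0),\mathtt{decide}_i(1),\mathtt{noop}\}$; local states have the form $\langle \mathit{time}_i,\mathit{init}_i,\mathit{decided}_i,\mathit{rd}_i,\ldots\rangle$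 with $\mathit{time}_i\in\mathbb N$, $\mathit{init}_i\in\{0,1\}$ (initial preference), $\mathit{decided}_i,\mathit{rd}_i\in\{0,1,\bot\}$; initial states have the form $\langle 0,\mathit{init}_i,\bot,\bot,\ldots\rangle$; there are pairwise disjoint sets $M^0,M^1,M^2$ with $\bot\notin M^0\cup M^1$ such that an agent performing $\mathtt{decide}_i(0)$ (resp. $\mathtt{decide}_i(1)$, resp. $\mathtt{noop}$) sends every agent a message in $M^0$ (resp. $M^1$, resp. $M^2$); $\delta_i$ increments $\mathit{time}_i$, sets $\mathit{decided}_i:=v$ if the action is $\mathtt{decide}_i(v)$ (otherwise leaves it unchanged), and sets $\mathit{rd}_i$ to $0$ (resp. $1$) if in that round $i$ received a message from an agent performing $\mathtt{decide}(0)$ (resp. $\mathtt{decide}(1)$), and to $\bot$ otherwise; $\pi$ interprets $\mathit{init}_i=v$, $\mathit{decided}_i=v$, $\mathit{time}_i=k$ by reading $i$'s local state, and $i\in\mathcal N$ as true at $(r,m)$ iff $i\in\mathcal N(r)$. Abbreviations: $\mathit{jdecided}_i=v$ is $\mathit{decided}_i=v\wedge\ominus(\mathit{decided}_i=\bot)$; $\mathit{deciding}_i=v$ is $\mathit{decided}_i=\bot\wedge\bigcirc(\mathit{decided}_i=v)$; $\exists v$ is $\bigvee_j \mathit{init}_j=v$. For an action protocol $P$, $\mathcal I_{\gamma,P}=(\mathcal R_{\mathcal E,\mathcal F,P},\pi)$. $P$ is an EBA decision protocol for $\gamma$ if in every run of $\mathcal I_{\gamma,P}$: (Unique Decision) no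 agent decides $v$ and later decides $1-v$; (Agreement) no two nonfaulty agents decide different values; (Validity) if a nonfaulty agent decides $v$ then $\mathit{init}_j=v$ for some $j$; (Termination) every nonfaulty agent eventually decides. Knowledge-based programs. A knowledge-based program $\mathbf P=(\mathbf P_1,\ldots,\mathbf P_n)$ has each $\mathbf P_i$ generated by $\mathbf P_i::=a\mid\text{if }\varphi\text{ then }\mathbf P_i\text{ else }\mathbf P_i$ with $a\in A_i$ and each test $\varphi$ a Boolean combination of formulas $K_i\psi$ and propositions determined by $i$'s local state; its truth at a point depends only on $i$'s local state. Given $\mathcal I$ and a local state $s$ of $i$, $\mathbf P_i^{\mathcal I}(s)$ is the action obtained by evaluating the tests at $s$ in $\mathcal I$. An action protocol $P$ implements $\mathbf P$ in $\gamma$ if $P_i(s)=\mathbf P_i^{\mathcal I}(s)$ for every $i$ and every local state $s$ of $i$ arising in $\mathcal I=\mathcal I_{\gamma,P}$. The program $\mathbf P^0$: for each agent $i$, $\mathbf P^0_i$ is: if $\mathit{decided}_i\neq\bot$ then $\mathtt{noop}$; else if $\mathit{init}_i=0\vee K_i(\bigvee_{j\in\mathit{Agt}}\mathit{jdecided}_j=0)$ then $\mathtt{decide}_i(0)$; else if $K_i(\bigwedge_{j\in\mathit{Agt}}\neg(\mathit{deciding}_j=0))$ then $\mathtt{decide}_i(1)$; else $\mathtt{noop}$. *)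

From mathcomp Require Import all_boot.
Set Implicit Arguments. Unset Strict Implicit. Unset Printing Implicit Defensive.

(* Values 0 and 1 are encoded as [false] and [true]. Agents are ['I_n]. *)

Inductive act := Decide of bool | Noop.

(* Failure patterns (N, F): F m i j = false means the message from i to j in
   round m+1 (from time m to time m+1) is lost. *)
Record fpattern (n : nat) := FPattern {
  nonfaulty : {set 'I_n};
  fdeliver : nat -> 'I_n -> 'I_n -> bool }.

Definition SO (n t : nat) (fp : fpattern n) : Prop :=
  #|~: nonfaulty fp| <= t /\
  forall m i j, fdeliver fp m i j = false -> i \notin nonfaulty fp.

(* Data of a context (E, F, pi): information-exchange protocol E with the
   EBA fields of local states exposed as projections, the message classes
   M^0, M^1, M^2, and the failure model F. *)
Record context (n : nat) := Context {
  Lst : 'I_n -> Type;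
  Ist : forall i, Lst i -> Prop;
  Msg : 'I_n -> Type;
  mu : forall i, Lst i -> act -> 'I_n -> option (Msg i);  (* mu_ij(s,a), None = bot *)
  delta : forall i, Lst i -> act -> (forall j, option (Msg j)) -> Lst i;
  time : forall i, Lst i -> nat;
  init : forall i, Lst i -> bool;
  decided : forall i, Lst i -> option bool;   (* None = bot *)
  rd : forall i, Lst i -> option bool;
  M0 : forall i, Msg i -> Prop;
  M1 : forall i, Msg i -> Prop;
  M2 : forall i, option (Msg i) -> Prop;      (* M^2 may contain bot *)
  FM : fpattern n -> Prop }.

Section Ctx.
Variables (n : nat) (g : context n).

Definition recv0 (msgs : forall j, option (Msg g j)) : Prop :=
  exists j m, msgs j = Some m /\ M0 m.
Definition recv1 (msgs : forall j, option (Msg g j)) : Prop :=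
  exists j m, msgs j = Some m /\ M1 m.

Definition EBA_context : Prop :=
  (forall i (s : Lst g i), Ist s -> time s = 0 /\ decided s = None /\ rd s = None) /\
  (* M^0, M^1, M^2 pairwise disjoint (bot is not in M^0, M^1 by typing) *)
  (forall i (m : Msg g i), M0 m -> M1 m -> False) /\
  (forall i (m : Msg g i), M0 m -> M2 (Some m) -> False) /\
  (forall i (m : Msg g i), M1 m -> M2 (Some m) -> False) /\
  (forall i (s : Lst g i) j, exists m, mu s (Decide false) j = Some m /\ M0 m) /\
  (forall i (s : Lst g i) j, exists m, mu s (Decide true) j = Some m /\ M1 m) /\
  (forall i (s : Lst g i) j, M2 (mu s Noop j)) /\
  (forall i (s : Lst g i) a msgs, time (delta s a msgs) = (time s).+1) /\
  (forall i (s : Lst g i) a msgs, init (delta s a msgs) = init s) /\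
  (forall i (s : Lst g i) v msgs, decided (delta s (Decide v) msgs) = Some v) /\
  (forall i (s : Lst g i) msgs, decided (delta s Noop msgs) = decided s) /\
  (forall i (s : Lst g i) a msgs, recv0 msgs -> ~ recv1 msgs ->
       rd (delta s a msgs) = Some false) /\
  (forall i (s : Lst g i) a msgs, recv1 msgs -> ~ recv0 msgs ->
       rd (delta s a msgs) = Some true) /\
  (forall i (s : Lst g i) a msgs, ~ recv0 msgs -> ~ recv1 msgs ->
       rd (delta s a msgs) = None).

Definition protocol := forall i, Lst g i -> act.

(* A run is determined by an initial global state: a failure pattern and an
   initial local state for each agent. *)
Record run := Run { rfp : fpattern n; rinit : forall i, Lst g i }.

Section Runs.
Variable P : protocol.

Definition inR (r : run) : Prop := FM g (rfp r) /\ forall i, Ist (rinit r i).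

Fixpoint gstate (fp : fpattern n) (s0 : forall i, Lst g i) (m : nat)
  : forall i, Lst g i :=
  match m with
  | 0 => s0
  | k.+1 => let s := gstate fp s0 k in
      fun i => delta (s i) (P (s i))
        (fun j => if fdeliver fp k j i then mu (s j) (P (s j)) i else None)
  end.

Definition lstate (r : run) (m : nat) (i : 'I_n) : Lst g i :=
  gstate (rfp r) (rinit r) m i.

Definition Knows (i : 'I_n) (s : Lst g i) (phi : run -> nat -> Prop) : Prop :=
  forall r' m', inR r' -> lstate r' m' i = s -> phi r' m'.

Definition jdecided (j : 'I_n) (v : bool) (r : run) (m : nat) : Prop :=
  decided (lstate r m j) = Some v /\ 0 < m /\ decided (lstate r m.-1 j) = None.
Definition deciding (j : 'I_n) (v : bool) (r : run) (m : nat) : Prop :=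
  decided (lstate r m j) = None /\ decided (lstate r m.+1 j) = Some v.

(* The action prescribed by the knowledge-based program P^0 at local state s
   of agent i (tests evaluated in I_{gamma,P}); the four clauses are the
   branches of the nested if-then-else. *)
Definition P0_prescribes (i : 'I_n) (s : Lst g i) (a : act) : Prop :=
  let T1 := init s = false \/
            Knows s (fun r m => exists j, jdecided j false r m) in
  let T2 := Knows s (fun r m => forall j, ~ deciding j false r m) in
  (decided s <> None -> a = Noop) /\
  (decided s = None -> T1 -> a = Decide false) /\
  (decided s = None -> ~ T1 -> T2 -> a = Decide true) /\
  (decided s = None -> ~ T1 -> ~ T2 -> a = Noop).

Definition implements_P0 : Prop :=
  forall r m i, inR r -> P0_prescribes (lstate r m i) (P (lstate r m i)).

Definition decides (r : run) (i : 'I_n) (v : bool) (k : nat) : Prop :=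
  exists k', k = k'.+1 /\ P (lstate r k' i) = Decide v.

Definition EBA_decision_protocol : Prop :=
  forall r, inR r ->
  (forall i v k k', decides r i v k -> decides r i (~~ v) k' -> ~ (k < k')) /\
  (forall i j v w k k', i \in nonfaulty (rfp r) -> j \in nonfaulty (rfp r) ->
     decides r i v k -> decides r j w k' -> v = w) /\
  (forall i v k, i \in nonfaulty (rfp r) -> decides r i v k ->
     exists j, init (lstate r 0 j) = v) /\
  (forall i, i \in nonfaulty (rfp r) -> exists v k, decides r i v k).

End Runs.
End Ctx.

From mathcomp Require Import all_boot.
From Stdlib Require Import Classical.

(* The argument rests on the "chain of 0-deciders" of the paper.  Whenever
   some agent decides 0 at time m+1, it does so because it knows that some
   agent just decided 0, i.e. some agent decided 0 at time m; iterating, a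
   0-decision at time m yields 0-deciders at every time 0..m, and they are
   pairwise distinct because an agent decides at most once.  A nonfaulty
   0-decider at time k is heard by everybody, and every agent that hears a
   0-decision (rd = 0) knows that some agent has just decided 0, so it
   decides 0 at time k+1 if it has not decided yet.
   - Validity: a chain of 0-deciders reaches time 0, where only an agent
     with initial value 0 can decide 0; deciding 1 requires init = 1.
   - Agreement: a nonfaulty 0-decision forces everybody to decide 0 next
     round; an earlier 1-decision would be simultaneous with a 0-decision of
     the chain, which the test for deciding 1 forbids.
   - Termination by time t+1: an agent still undecided at time t+1 knows
     nobody decides 0 at time t+1, for otherwise the t+1 distinct deciders
     at times 0..t contain a nonfaulty one, whom it would have heard. *)

Lemma SO_family_nonfaulty {n t} {fp : fpattern n} {f : 'I_t.+1 -> 'I_n} :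
  SO t fp -> injective f -> exists k, f k \in nonfaulty fp.
Proof.
move=> [Hcard _] finj; apply/existsP; apply: contraT.
rewrite negb_exists => /forallP Hf.
have Hsub : f @: [set: 'I_t.+1] \subset ~: nonfaulty fp.
  by apply/subsetP => _ /imsetP [k _ ->]; rewrite in_setC Hf.
have := leq_trans (subset_leq_card Hsub) Hcard.
by rewrite card_imset // cardsT card_ord ltnn.
Qed.

Lemma SO_delivers {n t} {fp : fpattern n} k {i} j :
  SO t fp -> i \in nonfaulty fp -> fdeliver fp k i j.
Proof. by move=> [_ HSO] Hi; apply: contraT => /negbTE /HSO; rewrite Hi. Qed.

Section Protocol.
Context {n t : nat} {g : context n} {P : protocol g}.
Hypothesis HE : EBA_context g.

Lemma lstateS r k i :
  lstate P r k.+1 i = delta (lstate P r k i) (P i (lstate P r k i))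
    (fun j => if fdeliver (rfp r) k j i
              then mu (lstate P r k j) (P j (lstate P r k j)) i else None).
Proof. by []. Qed.

Lemma decided_step r k i :
  decided (lstate P r k.+1 i) =
  if P i (lstate P r k i) is Decide v then Some v else decided (lstate P r k i).
Proof.
have [_ [_ [_ [_ [_ [_ [_ [_ [_ [Hdec [Hnoop _]]]]]]]]]]] := HE.
by rewrite lstateS; case: (P i _) => [v|]; [exact: Hdec | exact: Hnoop].
Qed.

Lemma deciding_action {r m j v} :
  decided (lstate P r m j) = None -> decided (lstate P r m.+1 j) = Some v ->
  P j (lstate P r m j) = Decide v.
Proof. by rewrite decided_step => ->; case: (P j _) => // w [->]. Qed.

Lemma init_constant r k i : init (lstate P r k i) = init (lstate P r 0 i).
Proof.
have [_ [_ [_ [_ [_ [_ [_ [_ [Hinit _]]]]]]]]] := HE.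
by elim: k => // k IH; rewrite lstateS Hinit.
Qed.

Lemma time_lstate r k i : inR r -> time (lstate P r k i) = k.
Proof.
have [H0 [_ [_ [_ [_ [_ [_ [Htime _]]]]]]]] := HE.
move=> [_ Hr]; elim: k => [|k IH]; first by case: (H0 _ _ (Hr i)).
by rewrite lstateS Htime IH.
Qed.

Lemma decided_initial r i : inR r -> decided (lstate P r 0 i) = None.
Proof. by have [H0 _] := HE; move=> [_ Hr]; case: (H0 _ _ (Hr i)) => _ []. Qed.

Lemma undecided_before {r i a b} :
  a <= b -> decided (lstate P r b i) = None -> decided (lstate P r a i) = None.
Proof.
elim: b => [|b IH]; first by rewrite leqn0 => /eqP ->.
rewrite leq_eqVlt ltnS => /orP [/eqP -> //| Hab].
by rewrite decided_step; case: (P i _) => // Hb; exact: IH.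
Qed.

Lemma no_decision_before_undecided {r i k m v} :
  k < m -> decided (lstate P r m i) = None -> P i (lstate P r k i) <> Decide v.
Proof.
move=> Hkm /(undecided_before Hkm) Hund Hv.
by move: Hund; rewrite decided_step Hv.
Qed.

Lemma first_decision {r m i} :
  inR r -> decided (lstate P r m i) <> None ->
  exists k v, k < m /\ P i (lstate P r k i) = Decide v.
Proof.
move=> Hr; elim: m => [|m IH]; first by rewrite decided_initial.
case E: (decided (lstate P r m i)) => [w|] Hd.
  have [|k [v [Hk Hv]]] := IH; first by rewrite E.
  by exists k, v; split=> //; exact: ltnW.
move: Hd; rewrite decided_step; case Hact: (P i _) => [v|]; last by rewrite E.
by move=> _; exists m, v.
Qed.

Lemma sent_M0 {i} {s : Lst g i} {a j m} :
  mu s a j = Some m -> M0 m -> a = Decide false.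
Proof.
have [_ [D01 [D02 [_ [_ [Mu1 [Mu2 _]]]]]]] := HE.
case: a => [[]|] // Hm HM0.
- by have [m' [Hm' HM1]] := Mu1 _ s j; move: Hm'; rewrite Hm => -[Em];
     subst m'; case: (D01 _ _ HM0 HM1).
- by have := Mu2 _ s j; rewrite Hm => HM2; case: (D02 _ _ HM0 HM2).
Qed.

Lemma sent_M1 {i} {s : Lst g i} {a j m} :
  mu s a j = Some m -> M1 m -> a = Decide true.
Proof.
have [_ [D01 [_ [D12 [Mu0 [_ [Mu2 _]]]]]]] := HE.
case: a => [[]|] // Hm HM1.
- by have [m' [Hm' HM0]] := Mu0 _ s j; move: Hm'; rewrite Hm => -[Em];
     subst m'; case: (D01 _ _ HM0 HM1).
- by have := Mu2 _ s j; rewrite Hm => HM2; case: (D12 _ _ HM1 HM2).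
Qed.

Hypothesis HI : implements_P0 P.

Definition zero_test {i} (s : Lst g i) : Prop :=
  init s = false \/ Knows P s (fun r m => exists j, jdecided P j false r m).
Definition one_test {i} (s : Lst g i) : Prop :=
  Knows P s (fun r m => forall j, ~ deciding P j false r m).

Lemma decide_undecided {r k i v} :
  inR r -> P i (lstate P r k i) = Decide v -> decided (lstate P r k i) = None.
Proof.
move=> Hr Hv; have [Hdone _] := HI r k i Hr.
by case E: (decided _) => [w|] //; rewrite Hdone ?E in Hv.
Qed.

Lemma P0_decides_zero {r k i} :
  inR r -> decided (lstate P r k i) = None -> zero_test (lstate P r k i) ->
  P i (lstate P r k i) = Decide false.
Proof. by move=> Hr; have [_ [H0 _]] := HI r k i Hr. Qed.

Lemma P0_decides_one {r k i} :
  inR r -> decided (lstate P r k i) = None -> ~ zero_test (lstate P r k i) ->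
  one_test (lstate P r k i) -> P i (lstate P r k i) = Decide true.
Proof. by move=> Hr; have [_ [_ [H1 _]]] := HI r k i Hr. Qed.

Lemma P0_zero_test {r k i} :
  inR r -> P i (lstate P r k i) = Decide false -> zero_test (lstate P r k i).
Proof.
move=> Hr Hv; have Hu := decide_undecided Hr Hv.
have [_ [_ [H1 Hnoop]]] := HI r k i Hr.
apply: NNPP => nT0; case: (classic (one_test (lstate P r k i))) => T1.
- by rewrite H1 in Hv.
- by rewrite Hnoop in Hv.
Qed.

Lemma P0_one_test {r k i} :
  inR r -> P i (lstate P r k i) = Decide true ->
  ~ zero_test (lstate P r k i) /\ one_test (lstate P r k i).
Proof.
move=> Hr Hv; have Hu := decide_undecided Hr Hv.
have [_ [H0 [_ Hnoop]]] := HI r k i Hr.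
have nT0 : ~ zero_test (lstate P r k i) by move=> T0; rewrite H0 in Hv.
split=> //; apply: NNPP => nT1; by rewrite Hnoop in Hv.
Qed.

Lemma decision_time_unique {r i a b v w} :
  inR r -> P i (lstate P r a i) = Decide v -> P i (lstate P r b i) = Decide w ->
  a = b.
Proof.
move=> Hr Ha Hb; case: (ltngtP a b) => // Hab.
- by case: (no_decision_before_undecided Hab (decide_undecided Hr Hb) Ha).
- by case: (no_decision_before_undecided Hab (decide_undecided Hr Ha) Hb).
Qed.

(* No agent decides 1 in the same round in which another decides 0: the
   1-decider would have to know that this does not happen. *)
Lemma no_simultaneous_decisions {r k i j} :
  inR r -> P j (lstate P r k j) = Decide false ->
  P i (lstate P r k i) = Decide true -> False.
Proof.
move=> Hr Hj Hi; have [_ T1] := P0_one_test Hr Hi.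
apply: (T1 r k Hr erefl j); split; first exact: (decide_undecided Hr Hj).
by rewrite decided_step Hj.
Qed.

(* Receiving a message from a 0-decider sets rd to 0: no 1-decision can be
   received in the same round. *)
Lemma rd_after_zero {r k i j} :
  inR r -> P j (lstate P r k j) = Decide false -> fdeliver (rfp r) k j i ->
  rd (lstate P r k.+1 i) = Some false.
Proof.
have [_ [_ [_ [_ [Mu0 [_ [_ [_ [_ [_ [_ [R0 _]]]]]]]]]]]] := HE.
move=> Hr Hj Hdel; rewrite lstateS; apply: R0.
- exists j; rewrite Hdel Hj; have [m [Hm HM]] := Mu0 _ (lstate P r k j) i.
  by exists m.
- move=> [j' [m [Hm HM1]]]; move: Hm; case: ifP => // _ Hm.
  exact: (no_simultaneous_decisions Hr Hj (sent_M1 Hm HM1)).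
Qed.

Lemma rd_zero_jdecided {r m i} :
  inR r -> rd (lstate P r m i) = Some false -> exists j, jdecided P j false r m.
Proof.
have [H0 [_ [_ [_ [_ [_ [_ [_ [_ [_ [_ [_ [R1 RN]]]]]]]]]]]]] := HE.
move=> Hr; case: m => [|m].
  by have [_ Hr0] := Hr; case: (H0 _ _ (Hr0 i)) => _ [_ ->].
rewrite lstateS; set msgs := (fun j => _).
case: (classic (recv0 msgs)) => [[j [mm [Hm HM0]]]|nr0] Hrd.
  move: Hm; rewrite /msgs; case: ifP => // _ Hm.
  have Hj := sent_M0 Hm HM0.
  exists j; split; first by rewrite decided_step Hj.
  by split=> //; exact: (decide_undecided Hr Hj).
case: (classic (recv1 msgs)) => nr1.
- by rewrite R1 in Hrd.
- by rewrite RN in Hrd.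
Qed.

Lemma hears_zero_decides_zero {r k i j} :
  inR r -> P j (lstate P r k j) = Decide false -> fdeliver (rfp r) k j i ->
  decided (lstate P r k.+1 i) = None -> P i (lstate P r k.+1 i) = Decide false.
Proof.
move=> Hr Hj Hdel Hu; apply: P0_decides_zero => //; right.
move=> r' m' Hr' Hs; apply: (rd_zero_jdecided (i := i) Hr').
by rewrite Hs; exact: (rd_after_zero Hr Hj Hdel).
Qed.

(* A 0-decision at time m+1 is preceded by a 0-decision at time m: the
   decider cannot rely on its own initial value (it would have decided at
   time 0), so it knows of an agent that has just decided 0. *)
Lemma zero_decision_step {r m j} :
  inR r -> P j (lstate P r m.+1 j) = Decide false ->
  exists j', P j' (lstate P r m j') = Decide false.
Proof.
move=> Hr Hj; case: (P0_zero_test Hr Hj) => [Hinit|HK].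
  rewrite init_constant in Hinit.
  have H0 := P0_decides_zero Hr (decided_initial r j Hr) (or_introl Hinit).
  by have := decision_time_unique Hr H0 Hj.
have [j' [Hd [_ Hd']]] := HK r m.+1 Hr erefl.
by exists j'; exact: deciding_action.
Qed.

Lemma zero_decision_earlier {r m k} :
  inR r -> k <= m -> (exists j, P j (lstate P r m j) = Decide false) ->
  exists j, P j (lstate P r k j) = Decide false.
Proof.
move=> Hr; elim: m => [|m IH]; first by rewrite leqn0 => /eqP ->.
rewrite leq_eqVlt ltnS => /orP [/eqP -> //| Hk] [j Hj].
exact: (IH Hk (zero_decision_step Hr Hj)).
Qed.

Lemma zero_decider_family {r m} :
  inR r -> (exists j, P j (lstate P r m j) = Decide false) ->
  exists f : 'I_m.+1 -> 'I_n,
    injective f /\ forall k, P (f k) (lstate P r k (f k)) = Decide false.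
Proof.
move=> Hr Hm.
have /fin_all_exists [f Hf] :
    forall k : 'I_m.+1, exists j, P j (lstate P r k j) = Decide false.
  by move=> k; apply: (zero_decision_earlier Hr _ Hm); rewrite -ltnS.
exists f; split=> // a b Hab; apply: val_inj.
by apply: (decision_time_unique Hr (Hf a)); rewrite Hab.
Qed.

Lemma validity {r i k v} :
  inR r -> P i (lstate P r k i) = Decide v -> exists j, init (lstate P r 0 j) = v.
Proof.
move=> Hr; case: v => Hv.
  exists i; have [nT0 _] := P0_one_test Hr Hv.
  by rewrite -(init_constant r k); case E: (init _) => //; case: nT0; left.
have [j Hj] := zero_decision_earlier Hr (leq0n k) (ex_intro _ i Hv).
case: (P0_zero_test Hr Hj) => [Hinit|HK]; first by exists j.
by have [j' [_ []]] := HK r 0 Hr erefl.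
Qed.

Hypothesis HFM : forall fp, FM g fp -> SO t fp.

Lemma run_SO {r : run g} : inR r -> SO t (rfp r).
Proof. by move=> [Hfp _]; exact: HFM. Qed.

Lemma agreement {r i j m m'} :
  inR r -> j \in nonfaulty (rfp r) ->
  P j (lstate P r m j) = Decide false -> P i (lstate P r m' i) = Decide true ->
  False.
Proof.
move=> Hr Hnf Hj Hi; case: (leqP m' m) => Hmm.
  have [j' Hj'] := zero_decision_earlier Hr Hmm (ex_intro _ j Hj).
  exact: (no_simultaneous_decisions Hr Hj' Hi).
have Hdel := SO_delivers m i (run_SO Hr) Hnf.
have Hu := undecided_before Hmm (decide_undecided Hr Hi).
have Hi0 := hears_zero_decides_zero Hr Hj Hdel Hu.
by have Em := decision_time_unique Hr Hi0 Hi; move: Hi0; rewrite Em Hi.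
Qed.

(* The heart of termination: an agent undecided at time t+1 that does not
   decide 0 knows that nobody is deciding 0 at time t+1; otherwise the chain
   of 0-deciders at times 0..t contains a nonfaulty agent it has heard. *)
Lemma no_late_zero_decision {r i} :
  inR r -> decided (lstate P r t.+1 i) = None ->
  ~ zero_test (lstate P r t.+1 i) -> forall j, ~ deciding P j false r t.+1.
Proof.
move=> Hr Hu nT0 j [Hd1 Hd2].
have Hj := zero_decision_step Hr (deciding_action Hd1 Hd2).
have [f [finj Hf]] := zero_decider_family Hr Hj.
have [k Hk] := SO_family_nonfaulty (run_SO Hr) finj.
have Hdel := SO_delivers k i (run_SO Hr) Hk.
have Hkt : k.+1 <= t.+1 := ltn_ord k.
have Hi := hears_zero_decides_zero Hr (Hf k) Hdel (undecided_before Hkt Hu).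
move: Hkt; rewrite leq_eqVlt => /orP [/eqP Ek|Hlt].
- by apply: nT0; rewrite -Ek; exact: (P0_zero_test Hr Hi).
- exact: (no_decision_before_undecided Hlt Hu Hi).
Qed.

Lemma termination {r} i : inR r -> exists v k, k <= t.+2 /\ decides P r i v k.
Proof.
move=> Hr; case E: (decided (lstate P r t.+1 i)) => [w|].
  have [|k [v [Hk Hv]]] := first_decision (m := t.+1) (i := i) Hr; first by rewrite E.
  by exists v, k.+1; split; [exact: leq_trans Hk _ | exists k].
case: (classic (zero_test (lstate P r t.+1 i))) => T0.
  by exists false, t.+2; split=> //; exists t.+1; split=> //;
     exact: P0_decides_zero.
exists true, t.+2; split=> //; exists t.+1; split=> //.
apply: P0_decides_one => // r' m' Hr' Hs.
have Em : m' = t.+1 by rewrite -(time_lstate r' m' i Hr') Hs time_lstate.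
by subst m'; apply: (no_late_zero_decision (i := i)); rewrite ?Hs.
Qed.

End Protocol.

Theorem mainTheorem1 (n t : nat) (g : context n) (P : protocol g) :
  t < n ->
  EBA_context g ->
  (forall fp, FM g fp -> SO t fp) ->
  implements_P0 P ->
  EBA_decision_protocol P /\
  (forall r, inR r -> forall i, i \in nonfaulty (rfp r) ->
     exists v k, k <= t.+2 /\ decides P r i v k) /\
  (forall r, inR r -> forall i v k, decides P r i v k ->
     exists j, init (lstate P r 0 j) = v).
Proof.
move=> _ HE HFM HI.
have Hvalid r : inR r -> forall i v k, decides P r i v k ->
    exists j, init (lstate P r 0 j) = v.
  by move=> Hr i v k [a [_ Ha]]; exact: (validity HE HI Hr Ha).
split; last split=> //; last by move=> r Hr i _; exact: termination.
move=> r Hr; split; [|split; [|split]].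
- move=> i v k k' [a [-> Ha]] [b [-> Hb]].
  by rewrite (decision_time_unique HE HI Hr Ha Hb) ltnn.
- move=> i j [] [] k k' Hi Hj [a [_ Ha]] [b [_ Hb]] //.
  + by case: (agreement HE HI HFM Hr Hj Hb Ha).
  + by case: (agreement HE HI HFM Hr Hi Ha Hb).
- by move=> i v k _; apply: Hvalid.
- by move=> i _; have [v [k [_ H]]] := termination HE HI HFM i Hr; exists v, k.
Qed.
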